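(* Let $\alpha\in(1/2,1)$, $\beta\in(0,1)$, $c\in\mathbb{R}$, and define $\varphi(x)=|x|^{-\beta}$ for $x<-1$ and $\varphi(x)=1$ for $x\ge -1$. Then, as $x\to-\infty$, $$(-\partial_{xx})^\alpha\varphi(x)+c\,\varphi'(x)=-\frac{c_\alpha}{2\alpha\,|x|^{2\alpha}}+\frac{c\,\beta}{|x|^{\beta+1}}+O\!\left(\frac{1}{|x|^{\beta+2\alpha}}\right).$$
   Context: $(-\partial_{xx})^\alpha u(x)=c_\alpha\,\mathrm{PV}\!\int_{\mathbb{R}}\frac{u(x)-u(z)}{|x-z|^{1+2\alpha}}\,dz$, where $c_\alpha>0$ is the normalizing constant of the fractional Laplacian (Fourier symbol $|\xi|^{2\alpha}$) and PV is the Cauchy principal value. *)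

From Stdlib Require Import Reals Lra.
Open Scope R_scope.

Definition is_RInt (f : R -> R) (a b I : R) : Prop :=
  exists pr : Riemann_integrable f a b, RiemannInt pr = I.

Definition is_Gamma (s G : R) : Prop :=
  forall e, 0 < e -> exists delta T, 0 < delta /\
    forall a b, 0 < a < delta -> T < b ->
      exists I, is_RInt (fun t => Rpower t (s - 1) * exp (- t)) a b I /\
                Rabs (I - G) < e.

(* Normalizing constant of the fractional Laplacian (symbol |xi|^(2 alpha)) in 1D:
   c_alpha = 4^alpha Gamma(1/2+alpha) / (sqrt(pi) |Gamma(-alpha)|),
   using |Gamma(-alpha)| = Gamma(1-alpha)/alpha for alpha in (0,1). *)
Definition is_c_alpha (alpha C : R) : Prop :=
  exists G1 G2, is_Gamma (1/2 + alpha) G1 /\ is_Gamma (1 - alpha) G2 /\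
    C = Rpower 4 alpha * G1 * alpha / (sqrt PI * G2).

Definition is_frac_lap (alpha C : R) (u : R -> R) (x L : R) : Prop :=
  let k := fun z => (u x - u z) / Rpower (Rabs (x - z)) (1 + 2 * alpha) in
  forall e, 0 < e -> exists delta R0, 0 < delta /\
    forall eps Rr, 0 < eps < delta -> R0 < Rr -> eps < Rr ->
      exists I1 I2, is_RInt k (x - Rr) (x - eps) I1 /\
                    is_RInt k (x + eps) (x + Rr) I2 /\
                    Rabs (C * (I1 + I2) - L) < e.

Definition phi (beta : R) (x : R) : R :=
  if Rlt_dec x (-1) then Rpower (Rabs x) (- beta) else 1.

From Pilot Require Import Defs.
From Stdlib Require Import Reals Lra Lia.
From Coquelicot Require Import Coquelicot.
Open Scope R_scope.

(* Fix x < -2 and write s = -x.  The substitution z = x ∓ t folds the principal-value integral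
   defining (-∂xx)^α φ(x) into PV ∫_0^∞ integrand(t) dt, where
       integrand(t) = (2 φ(-s) - φ(-s-t) - φ(-s+t)) / t^(1+2α).
   We show that this principal value L0 exists (a Cauchy argument with explicit moduli
   e^(2-2α) near 0 and r^(-2α) near ∞) and that
       |L0 + s^(-2α)/(2α)| <= K0 (s/2)^(-β-2α),
   by splitting (0,∞) at s/2, s-1 and s: near 0 the second difference is O(t^2 s^(-β-2));
   on [s/2, s-1] the singularity (s-t)^(-β) of φ(-s+t) is integrable; on [s-1, s] the
   integrand is bounded; on [s, ∞) one has φ(-s+t) = 1, which produces the main term
   -s^(-2α)/(2α).  Since φ'(x) = β s^(-β-1), the drift terms c φ' cancel exactly and the
   theorem follows with remainder C_α (L0 + s^(-2α)/(2α)).  The value of the constant C_α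
   plays no role: the estimate holds for every C_α. *)

Lemma Rpower_pos a q : 0 < Rpower a q.
Proof. apply exp_pos. Qed.

Lemma Rpower_le_base_nonpos a b q : 0 < a <= b -> q <= 0 -> Rpower b q <= Rpower a q.
Proof.
  intros [Ha Hab] Hq; unfold Rpower.
  assert (ln a <= ln b) by (apply ln_le; lra).
  destruct (Req_dec (q * ln b) (q * ln a)) as [E|E]; [rewrite E; lra|].
  left; apply exp_increasing; nra.
Qed.

Lemma Rpower_1_base q : Rpower 1 q = 1.
Proof. unfold Rpower; rewrite ln_1, Rmult_0_r; apply exp_0. Qed.

Lemma is_derive_Rpower y q : 0 < y -> is_derive (fun t => Rpower t q) y (q * Rpower y (q - 1)).
Proof. intros; apply is_derive_Reals; now apply derivable_pt_lim_power. Qed.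

Lemma continuous_Rpower t q : 0 < t -> continuous (fun t => Rpower t q) t.
Proof.
  intros Ht; apply (ex_derive_continuous (K := R_AbsRing) (V := R_NormedModule)).
  eexists; now apply is_derive_Rpower.
Qed.

Lemma continuity_pt_Rpower_comp f z q : continuity_pt f z -> 0 < f z ->
  continuity_pt (fun z => Rpower (f z) q) z.
Proof.
  intros Hf Hp; apply (continuity_pt_comp f (fun y => Rpower y q)); auto.
  now apply continuity_pt_filterlim, continuous_Rpower.
Qed.

Definition vanishes_at_0 (w : R -> R) : Prop :=
  forall eta, 0 < eta -> exists d, 0 < d /\ forall e, 0 < e < d -> w e < eta.

Definition vanishes_at_infty (v : R -> R) : Prop :=
  forall eta, 0 < eta -> exists M, forall r, M < r -> v r < eta.

Lemma vanishes_at_0_Rpower C gm : 0 <= C -> 0 < gm ->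
  vanishes_at_0 (fun e => C * Rpower e gm).
Proof.
  intros HC Hg eta Heta.
  set (a := eta / (C + 1)); assert (Ha : 0 < a) by (apply Rdiv_lt_0_compat; lra).
  exists (Rpower a (/ gm)); split; [apply Rpower_pos|]; intros e He.
  assert (Hlt : Rpower e gm < a).
  { replace a with (Rpower (Rpower a (/ gm)) gm)
      by (rewrite Rpower_mult, Rinv_l, Rpower_1 by lra; reflexivity).
    apply Rlt_Rpower_l; lra. }
  assert (C * a < eta) by (assert (C * a = eta - a) by (unfold a; field; lra); lra).
  pose proof (Rpower_pos e gm); nra.
Qed.

Lemma vanishes_at_infty_Rpower C a : 0 <= C -> 0 < a ->
  vanishes_at_infty (fun r => C * Rpower r (- a)).
Proof.
  intros HC Ha eta Heta.
  set (b := eta / (C + 1)); assert (Hb : 0 < b) by (apply Rdiv_lt_0_compat; lra).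
  exists (Rpower b (- / a)); intros r Hr.
  pose proof (Rpower_pos b (- / a)).
  assert (Hgt : / b < Rpower r a).
  { replace (/ b) with (Rpower (Rpower b (- / a)) a).
    - apply Rlt_Rpower_l; lra.
    - rewrite Rpower_mult, <- Ropp_mult_distr_l, Rinv_l, Rpower_Ropp, Rpower_1 by lra.
      reflexivity. }
  assert (Hlt : Rpower r (- a) < b).
  { rewrite Rpower_Ropp; rewrite <- (Rinv_inv b); apply Rinv_lt_contravar; [|lra].
    apply Rmult_lt_0_compat; [apply Rinv_0_lt_compat; lra | apply Rpower_pos]. }
  assert (C * b < eta) by (assert (C * b = eta - b) by (unfold b; field; lra); lra).
  pose proof (Rpower_pos r (- a)); nra.
Qed.

Lemma RInt_swap_R f a b : ex_RInt f a b -> RInt f b a = - RInt f a b.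
Proof. intros H; symmetry; apply (opp_RInt_swap (V := R_CompleteNormedModule) f a b H). Qed.

Lemma RInt_plus_R f h a b : ex_RInt f a b -> ex_RInt h a b ->
  RInt (fun t => f t + h t) a b = RInt f a b + RInt h a b.
Proof. intros H1 H2; apply (RInt_plus (V := R_CompleteNormedModule) f h a b H1 H2). Qed.

Lemma RInt_Chasles_R f a b c : ex_RInt f a b -> ex_RInt f b c ->
  RInt f a b + RInt f b c = RInt f a c.
Proof. intros H1 H2; apply (RInt_Chasles (V := R_CompleteNormedModule) f a b c H1 H2). Qed.

Lemma is_RInt_scal_R f a b k I : is_RInt f a b I -> is_RInt (fun t => k * f t) a b (k * I).
Proof. apply (is_RInt_scal f a b k I). Qed.

Lemma abs_RInt_le_dominated f h a b I : a <= b -> ex_RInt f a b -> is_RInt h a b I ->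
  (forall t, a <= t <= b -> Rabs (f t) <= h t) -> Rabs (RInt f a b) <= I.
Proof.
  intros Hab Hf Hh Hb.
  assert (Hh' : ex_RInt h a b) by (eexists; eauto).
  rewrite <- (is_RInt_unique h a b I Hh).
  assert (Hup : RInt f a b <= RInt h a b).
  { apply RInt_le; auto; intros t Ht.
    pose proof (Hb t ltac:(lra)); pose proof (Rle_abs (f t)); lra. }
  assert (Hlow : RInt (fun t => - h t) a b <= RInt f a b).
  { apply RInt_le; auto; [apply (ex_RInt_opp h a b Hh')|]; intros t Ht.
    pose proof (Hb t ltac:(lra)); pose proof (Rle_abs (- f t)); rewrite Rabs_Ropp in *; lra. }
  assert (Hopp : RInt (fun t => - h t) a b = - RInt h a b)
    by apply (RInt_opp (V := R_CompleteNormedModule) h a b Hh').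
  apply Rabs_le; lra.
Qed.

Lemma abs_RInt_le_unordered f (P : R -> Prop) (h : R -> R) :
  (forall u v, P u -> P v -> ex_RInt f u v) ->
  (forall u v, P u -> P v -> u <= v -> Rabs (RInt f u v) <= h u + h v) ->
  forall u v, P u -> P v -> Rabs (RInt f u v) <= h u + h v.
Proof.
  intros Hex Hb u v Hu Hv; destruct (Rle_dec u v); [now apply Hb|].
  rewrite RInt_swap_R, Rabs_Ropp, Rplus_comm by auto; apply Hb; auto; lra.
Qed.

Lemma is_RInt_Rpower a b q : 0 < a -> 0 < b -> q + 1 <> 0 ->
  is_RInt (fun t => Rpower t q) a b ((Rpower b (q + 1) - Rpower a (q + 1)) / (q + 1)).
Proof.
  intros Ha Hb Hq.
  set (F := fun t => / (q + 1) * Rpower t (q + 1)).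
  replace ((Rpower b (q + 1) - Rpower a (q + 1)) / (q + 1)) with (minus (F b) (F a))
    by (unfold F, minus, plus, opp; simpl; field; auto).
  assert (Hpos : forall t, Rmin a b <= t <= Rmax a b -> 0 < t)
    by (intros t Ht; unfold Rmin, Rmax in Ht; destruct Rle_dec; lra).
  apply (is_RInt_derive (V := R_CompleteNormedModule) F); intros t Ht.
  - replace (Rpower t q) with (/ (q + 1) * ((q + 1) * Rpower t (q + 1 - 1)))
      by (replace (q + 1 - 1) with q by ring; field; auto).
    apply is_derive_scal, is_derive_Rpower, Hpos, Ht.
  - apply continuous_Rpower, Hpos, Ht.
Qed.

Lemma is_RInt_Rpower_reflected s a b be : a <= b < s -> be <> 1 ->
  is_RInt (fun t => Rpower (s - t) (- be)) a b
    ((Rpower (s - a) (1 - be) - Rpower (s - b) (1 - be)) / (1 - be)).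
Proof.
  intros Hab Hq.
  set (F := fun t => - / (1 - be) * Rpower (s - t) (1 - be)).
  replace ((Rpower (s - a) (1 - be) - Rpower (s - b) (1 - be)) / (1 - be))
    with (minus (F b) (F a)) by (unfold F, minus, plus, opp; simpl; field; lra).
  assert (Hpos : forall t, Rmin a b <= t <= Rmax a b -> 0 < s - t)
    by (intros t Ht; unfold Rmin, Rmax in Ht; destruct Rle_dec; lra).
  apply (is_RInt_derive (V := R_CompleteNormedModule) F); intros t Ht.
  - replace (Rpower (s - t) (- be))
      with (- / (1 - be) * scal (-1) ((1 - be) * Rpower (s - t) (1 - be - 1))).
    + apply is_derive_scal, (is_derive_comp (fun u => Rpower u (1 - be)) (fun t => s - t)).
      * apply is_derive_Rpower, Hpos, Ht.
      * auto_derive; [trivial | ring].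
    + replace (1 - be - 1) with (- be) by ring.
      unfold scal; simpl; unfold mult; simpl; field; lra.
  - apply (continuous_comp (fun t => s - t) (fun u => Rpower u (- be))).
    + apply (ex_derive_continuous (K := R_AbsRing) (V := R_NormedModule)).
      eexists; auto_derive; [trivial | reflexivity].
    + apply continuous_Rpower, Hpos, Ht.
Qed.

(** * Limits of two-parameter nets *)

Definition converges_0_infty (F : R -> R -> R) (L : R) : Prop :=
  forall eta, 0 < eta -> exists delta R0, 0 < delta /\
    forall e r, 0 < e < delta -> R0 < r -> Rabs (F e r - L) < eta.

Lemma vanishes_at_0_seq w e0 : 0 < e0 -> vanishes_at_0 w ->
  forall eta, 0 < eta -> exists N : nat, forall n, (n >= N)%nat -> w (e0 / (INR n + 2)) < eta.
Proof.
  intros He0 Hw eta Heta; destruct (Hw eta Heta) as [d [Hd Hwd]].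
  destruct (INR_archimed 1 (e0 / d)) as [N HN]; [lra|]; rewrite Rmult_1_r in HN.
  exists N; intros n Hn; apply Hwd.
  assert (INR N <= INR n) by (apply le_INR; lia); pose proof (pos_INR n).
  split; [apply Rdiv_lt_0_compat; lra|].
  apply Rmult_lt_reg_r with (INR n + 2); [lra|].
  unfold Rdiv; rewrite Rmult_assoc, Rinv_l, Rmult_1_r by lra.
  assert (e0 = e0 / d * d) by (field; lra); nra.
Qed.

Lemma vanishes_at_infty_seq v R0 : vanishes_at_infty v ->
  forall eta, 0 < eta -> exists N : nat, forall n, (n >= N)%nat -> v (R0 + INR n + 1) < eta.
Proof.
  intros Hv eta Heta; destruct (Hv eta Heta) as [M HM].
  destruct (INR_archimed 1 (Rabs M + Rabs R0)) as [N HN]; [lra|]; rewrite Rmult_1_r in HN.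
  exists N; intros n Hn; apply HM.
  assert (INR N <= INR n) by (apply le_INR; lia).
  pose proof (Rle_abs M); pose proof (Rle_abs (- R0)); rewrite Rabs_Ropp in *; lra.
Qed.

Lemma cauchy_net_limit (F : R -> R -> R) (w v : R -> R) (e0 R0 : R) :
  0 < e0 -> vanishes_at_0 w -> vanishes_at_infty v ->
  (forall e e' r r', 0 < e < e0 -> 0 < e' < e0 -> R0 < r -> R0 < r' ->
      Rabs (F e r - F e' r') <= w e + w e' + v r + v r') ->
  exists L, forall e r, 0 < e < e0 -> R0 < r -> Rabs (F e r - L) <= w e + v r.
Proof.
  intros He0 Hw Hv HF.
  set (en := fun n : nat => e0 / (INR n + 2)).
  set (rn := fun n : nat => R0 + INR n + 1).
  assert (Hen : forall n, 0 < en n < e0).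
  { intros n; unfold en; pose proof (pos_INR n); split; [apply Rdiv_lt_0_compat; lra|].
    apply Rmult_lt_reg_r with (INR n + 2); [lra|].
    unfold Rdiv; rewrite Rmult_assoc, Rinv_l, Rmult_1_r by lra; nra. }
  assert (Hrn : forall n, R0 < rn n) by (intros n; unfold rn; pose proof (pos_INR n); lra).
  set (u := fun n => F (en n) (rn n)).
  assert (Hmod : forall eta, 0 < eta ->
            exists N : nat, forall n, (n >= N)%nat -> w (en n) + v (rn n) < eta).
  { intros eta Heta.
    destruct (vanishes_at_0_seq w e0 He0 Hw (eta / 2)) as [N1 H1]; [lra|].
    destruct (vanishes_at_infty_seq v R0 Hv (eta / 2)) as [N2 H2]; [lra|].
    exists (max N1 N2); intros n Hn.
    specialize (H1 n ltac:(lia)); specialize (H2 n ltac:(lia)); unfold en, rn; lra. }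
  assert (Hcauchy : Cauchy_crit u).
  { intros eta Heta; destruct (Hmod (eta / 2)) as [N HN]; [lra|].
    exists N; intros n m Hn Hm; unfold R_dist, u.
    eapply Rle_lt_trans; [apply HF; auto|].
    pose proof (HN n Hn); pose proof (HN m Hm); lra. }
  destruct (Rcomplete.R_complete u Hcauchy) as [L HL].
  exists L; intros e r He Hr; apply Rle_plus_epsilon; intros eta Heta.
  destruct (Hmod (eta / 2)) as [N1 HN1]; [lra|].
  destruct (HL (eta / 2)) as [N2 HN2]; [lra|].
  set (n := max N1 N2).
  specialize (HN1 n ltac:(unfold n; lia)); specialize (HN2 n ltac:(unfold n; lia)).
  unfold R_dist in HN2.
  pose proof (HF e (en n) r (rn n) He (Hen n) Hr (Hrn n)) as Hn; fold (u n) in Hn.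
  pose proof (Rabs_triang (F e r - u n) (u n - L)) as Htri.
  replace (F e r - u n + (u n - L)) with (F e r - L) in Htri by ring.
  lra.
Qed.

Lemma converges_of_cauchy_net (F : R -> R -> R) (w v : R -> R) (e0 R0 : R) :
  0 < e0 -> vanishes_at_0 w -> vanishes_at_infty v ->
  (forall e e' r r', 0 < e < e0 -> 0 < e' < e0 -> R0 < r -> R0 < r' ->
      Rabs (F e r - F e' r') <= w e + w e' + v r + v r') ->
  exists L, converges_0_infty F L.
Proof.
  intros He0 Hw Hv HF.
  destruct (cauchy_net_limit F w v e0 R0 He0 Hw Hv HF) as [L HL].
  exists L; intros eta Heta.
  destruct (Hw (eta / 2)) as [d [Hd Hwd]]; [lra|].
  destruct (Hv (eta / 2)) as [M HM]; [lra|].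
  exists (Rmin d e0), (Rmax M R0); split; [now apply Rmin_pos|].
  intros e r He Hr.
  pose proof (Rmin_l d e0); pose proof (Rmin_r d e0).
  pose proof (Rmax_l M R0); pose proof (Rmax_r M R0).
  pose proof (HL e r ltac:(lra) ltac:(lra)).
  pose proof (Hwd e ltac:(lra)); pose proof (HM r ltac:(lra)); lra.
Qed.

Lemma converges_bound (F : R -> R -> R) (L a B : R) (v : R -> R) (e0 R0 : R) :
  converges_0_infty F L -> vanishes_at_infty v -> 0 < e0 ->
  (forall e r, 0 < e < e0 -> R0 < r -> Rabs (F e r - a) <= B + v r) ->
  Rabs (L - a) <= B.
Proof.
  intros HFL Hv He0 HB; apply Rle_plus_epsilon; intros eta Heta.
  destruct (HFL (eta / 2)) as [d [R1 [Hd HR1]]]; [lra|].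
  destruct (Hv (eta / 2)) as [M HM]; [lra|].
  set (e := Rmin d e0 / 2); set (r := Rmax (Rmax R1 R0) M + 1).
  assert (He : 0 < e < Rmin d e0) by (unfold e; pose proof (Rmin_pos d e0 Hd He0); lra).
  pose proof (Rmin_l d e0); pose proof (Rmin_r d e0).
  pose proof (Rmax_l (Rmax R1 R0) M); pose proof (Rmax_r (Rmax R1 R0) M).
  pose proof (Rmax_l R1 R0); pose proof (Rmax_r R1 R0).
  pose proof (HR1 e r ltac:(lra) ltac:(unfold r; lra)).
  pose proof (HB e r ltac:(lra) ltac:(unfold r; lra)).
  pose proof (HM r ltac:(unfold r; lra)).
  pose proof (Rabs_triang (F e r - a) (- (F e r - L))) as Htri.
  rewrite Rabs_Ropp in Htri; replace (F e r - a + - (F e r - L)) with (L - a) in Htri by ring.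
  lra.
Qed.

(* Second-difference estimate: [|2 f(a) - f(a+t) - f(a-t)| <= 2 M t^2] when [|f''| <= M]
   on [[a-t, a+t]]; two applications of the mean value theorem. *)

Lemma second_difference_bound (f f' f'' : R -> R) a t M : 0 < t ->
  (forall y, a - t <= y <= a + t -> is_derive f y (f' y)) ->
  (forall y, a - t <= y <= a + t -> is_derive f' y (f'' y)) ->
  (forall y, a - t <= y <= a + t -> Rabs (f'' y) <= M) ->
  Rabs (2 * f a - f (a + t) - f (a - t)) <= 2 * M * t ^ 2.
Proof.
  intros Ht Hf Hf' HM.
  set (G := fun v => f (a + v) + f (a - v)).
  set (dG := fun v => f' (a + v) - f' (a - v)).
  assert (HG : forall v, 0 <= v <= t -> is_derive G v (dG v)).
  { intros v Hv.
    assert (H1 : is_derive (fun v => f (a + v)) v (scal 1 (f' (a + v)))).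
    { apply (is_derive_comp f (fun v => a + v)); [apply Hf; lra | auto_derive; [trivial | ring]]. }
    assert (H2 : is_derive (fun v => f (a - v)) v (scal (-1) (f' (a - v)))).
    { apply (is_derive_comp f (fun v => a - v)); [apply Hf; lra | auto_derive; [trivial | ring]]. }
    replace (dG v) with (plus (scal 1 (f' (a + v))) (scal (-1) (f' (a - v))))
      by (unfold dG, plus, scal; simpl; unfold mult; simpl; ring).
    exact (is_derive_plus _ _ _ _ _ H1 H2). }
  destruct (MVT_gen G 0 t dG) as [c [Hc Ec]].
  { intros v Hv; apply HG; unfold Rmin, Rmax in Hv; destruct Rle_dec; lra. }
  { intros v Hv; apply derivable_continuous_pt; exists (dG v); apply is_derive_Reals, HG.
    unfold Rmin, Rmax in Hv; destruct Rle_dec; lra. }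
  rewrite Rmin_left, Rmax_right in Hc by lra.
  destruct (MVT_gen f' (a - c) (a + c) f'') as [d [Hd Ed]].
  { intros y Hy; apply Hf'; unfold Rmin, Rmax in Hy; destruct Rle_dec; lra. }
  { intros y Hy; apply derivable_continuous_pt; exists (f'' y); apply is_derive_Reals, Hf'.
    unfold Rmin, Rmax in Hy; destruct Rle_dec; lra. }
  rewrite Rmin_left, Rmax_right in Hd by lra.
  assert (Ediff : 2 * f a - f (a + t) - f (a - t) = - (f'' d * (2 * c) * t)).
  { unfold G, dG in Ec; rewrite Ed in Ec.
    rewrite Rplus_0_r, Rminus_0_r, Rminus_0_r in Ec.
    replace (a + c - (a - c)) with (2 * c) in Ec by ring; lra. }
  rewrite Ediff, Rabs_Ropp, Rabs_mult, Rabs_mult, (Rabs_right (2 * c)), (Rabs_right t) by lra.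
  pose proof (HM d ltac:(lra)); pose proof (Rabs_pos (f'' d)).
  assert (2 * c * t <= 2 * t * t) by nra; simpl; nra.
Qed.

Section Profile.
Variable beta : R.

(* A closed formula for [φ] showing it is continuous. *)
Lemma phi_closed_form z : phi beta z = Rpower ((1 - z + Rabs (1 + z)) / 2) (- beta).
Proof.
  unfold phi; destruct (Rlt_dec z (-1)).
  - f_equal; rewrite !Rabs_left by lra; lra.
  - rewrite Rabs_right by lra; replace ((1 - z + (1 + z)) / 2) with 1 by lra.
    now rewrite Rpower_1_base.
Qed.

Lemma phi_lt z : z < -1 -> phi beta z = Rpower (- z) (- beta).
Proof. intros; unfold phi; destruct (Rlt_dec z (-1)); [|lra]; now rewrite Rabs_left by lra. Qed.

Lemma phi_ge z : -1 <= z -> phi beta z = 1.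
Proof. intros; unfold phi; destruct (Rlt_dec z (-1)); lra. Qed.

Lemma phi_le z : z <= -1 -> phi beta z <= Rpower (- z) (- beta).
Proof.
  intros [Hz|Hz]; [rewrite phi_lt; lra|].
  subst; rewrite phi_ge by lra; replace (- -1) with 1 by lra; rewrite Rpower_1_base; lra.
Qed.

Lemma phi_pos z : 0 < phi beta z.
Proof. rewrite phi_closed_form; apply Rpower_pos. Qed.

Lemma phi_le_1 z : 0 <= beta -> phi beta z <= 1.
Proof.
  intros Hb; rewrite phi_closed_form; apply Rle_trans with (Rpower 1 (- beta)); [|right; apply Rpower_1_base].
  apply Rpower_le_base_nonpos; [|lra]; pose proof (Rle_abs (1 + z)); lra.
Qed.

Lemma phi_continuous z : continuity_pt (phi beta) z.
Proof.
  apply continuity_pt_ext with (fun z => Rpower ((1 - z + Rabs (1 + z)) / 2) (- beta)).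
  { intros y; now rewrite phi_closed_form. }
  apply continuity_pt_Rpower_comp; [|pose proof (Rle_abs (1 + z)); lra].
  apply continuity_pt_mult; [|apply continuity_pt_const; intros ?; reflexivity].
  apply continuity_pt_plus; [apply continuity_pt_minus|].
  - apply continuity_pt_const; intros ?; reflexivity.
  - apply continuity_pt_id.
  - apply (continuity_pt_comp (fun z => 1 + z) Rabs).
    + apply continuity_pt_plus; [apply continuity_pt_const; intros ?; reflexivity|].
      apply continuity_pt_id.
    + apply continuity_pt_filterlim, continuous_Rabs.
Qed.

Lemma phi_derivative x : x < -1 ->
  derivable_pt_lim (phi beta) x (beta * Rpower (- x) (- beta - 1)).
Proof.
  intros hx; apply is_derive_Reals.
  apply (is_derive_ext_loc (fun z => Rpower (- z) (- beta))).
  - exists (mkposreal (-1 - x) ltac:(lra)); intros z Hz; change (Rabs (z - x) < -1 - x) in Hz.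
    apply Rabs_def2 in Hz; simpl; rewrite phi_lt by lra; reflexivity.
  - replace (beta * Rpower (- x) (- beta - 1)) with (scal (-1) (- beta * Rpower (- x) (- beta - 1)))
      by (unfold scal; simpl; unfold mult; simpl; ring).
    apply (is_derive_comp (fun u => Rpower u (- beta)) (fun z => - z)).
    + apply is_derive_Rpower; lra.
    + auto_derive; [trivial | ring].
Qed.

End Profile.

(** * The integrand on (0,∞) for fixed [s = -x > 2] *)

Section Integrand.
Variables alpha beta s : R.
Hypothesis halpha : 1/2 < alpha < 1.
Hypothesis hbeta : 0 < beta < 1.
Hypothesis hs : 2 < s.

Definition sdiff t := 2 * phi beta (- s) - phi beta (- s - t) - phi beta (- s + t).
Definition integrand t := sdiff t / Rpower t (1 + 2 * alpha).

Lemma integrand_eq t : integrand t = sdiff t * Rpower t (- (1 + 2 * alpha)).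
Proof. unfold integrand; rewrite Rpower_Ropp; reflexivity. Qed.

Lemma integrand_continuous t : 0 < t -> continuous integrand t.
Proof.
  intros Ht; apply continuity_pt_filterlim; unfold integrand, sdiff.
  assert (Hlin : forall a b, continuity_pt (fun t => phi beta (a + b * t)) t).
  { intros a b; apply (continuity_pt_comp (fun t => a + b * t) (phi beta)); [|apply phi_continuous].
    apply continuity_pt_plus; [apply continuity_pt_const; intros ?; reflexivity|].
    apply continuity_pt_mult; [apply continuity_pt_const; intros ?; reflexivity|].
    apply continuity_pt_id. }
  apply continuity_pt_div.
  - apply continuity_pt_minus; [apply continuity_pt_minus|].
    + apply continuity_pt_const; intros ?; reflexivity.
    + eapply continuity_pt_ext; [|apply (Hlin (- s) (-1))]; intros; simpl; f_equal; ring.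
    + eapply continuity_pt_ext; [|apply (Hlin (- s) 1)]; intros; simpl; f_equal; ring.
  - apply continuity_pt_filterlim, continuous_Rpower, Ht.
  - pose proof (Rpower_pos t (1 + 2 * alpha)); lra.
Qed.

Lemma integrand_ex a b : 0 < a -> 0 < b -> ex_RInt integrand a b.
Proof.
  intros Ha Hb; apply (ex_RInt_continuous (V := R_CompleteNormedModule)); intros z Hz.
  apply integrand_continuous; unfold Rmin in Hz; destruct Rle_dec; lra.
Qed.

Lemma phi_at_minus_s : phi beta (- s) = Rpower s (- beta).
Proof. rewrite phi_lt by lra; f_equal; ring. Qed.

Lemma sdiff_abs t : Rabs (sdiff t) <= 2.
Proof.
  unfold sdiff; apply Rabs_le.
  pose proof (phi_pos beta (- s)); pose proof (phi_pos beta (- s - t));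
    pose proof (phi_pos beta (- s + t)).
  pose proof (phi_le_1 beta (- s) ltac:(lra)); pose proof (phi_le_1 beta (- s - t) ltac:(lra));
    pose proof (phi_le_1 beta (- s + t) ltac:(lra)); lra.
Qed.

Lemma sdiff_left_part t : 0 <= t ->
  Rabs (2 * phi beta (- s) - phi beta (- s - t)) <= 2 * Rpower s (- beta).
Proof.
  intros Ht; rewrite phi_at_minus_s, (phi_lt beta (- s - t)) by lra.
  assert (Rpower (- (- s - t)) (- beta) <= Rpower s (- beta))
    by (apply Rpower_le_base_nonpos; lra).
  pose proof (Rpower_pos (- (- s - t)) (- beta)); pose proof (Rpower_pos s (- beta)).
  apply Rabs_le; lra.
Qed.

Lemma sdiff_middle t : 0 <= t <= s - 1 ->
  Rabs (sdiff t) <= 2 * Rpower s (- beta) + Rpower (s - t) (- beta).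
Proof.
  intros Ht; unfold sdiff.
  pose proof (sdiff_left_part t ltac:(lra)).
  pose proof (phi_pos beta (- s + t)); pose proof (phi_le beta (- s + t) ltac:(lra)).
  replace (- (- s + t)) with (s - t) in * by ring.
  pose proof (Rabs_triang (2 * phi beta (- s) - phi beta (- s - t)) (- phi beta (- s + t))) as Htri.
  rewrite Rabs_Ropp, (Rabs_right (phi beta (- s + t))) in Htri by lra.
  replace (2 * phi beta (- s) - phi beta (- s - t) + - phi beta (- s + t))
    with (2 * phi beta (- s) - phi beta (- s - t) - phi beta (- s + t)) in Htri by ring.
  lra.
Qed.

Lemma sdiff_near_zero t : 0 < t <= s / 2 ->
  Rabs (sdiff t) <= 2 * beta * (beta + 1) * Rpower (s / 2) (- beta - 2) * t ^ 2.
Proof.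
  intros Ht.
  replace (sdiff t) with (2 * Rpower s (- beta) - Rpower (s + t) (- beta) - Rpower (s - t) (- beta)).
  2:{ unfold sdiff; rewrite phi_at_minus_s, (phi_lt beta (- s - t)), (phi_lt beta (- s + t)) by lra.
      do 2 f_equal; [f_equal|]; f_equal; ring. }
  replace (2 * beta * (beta + 1) * Rpower (s / 2) (- beta - 2) * t ^ 2)
    with (2 * (beta * (beta + 1) * Rpower (s / 2) (- beta - 2)) * t ^ 2) by ring.
  apply (second_difference_bound (fun y => Rpower y (- beta))
           (fun y => - beta * Rpower y (- beta - 1))
           (fun y => - beta * ((- beta - 1) * Rpower y (- beta - 1 - 1)))); [lra| | |].
  - intros y Hy; apply is_derive_Rpower; lra.
  - intros y Hy; apply is_derive_scal, is_derive_Rpower; lra.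
  - intros y Hy; replace (- beta - 1 - 1) with (- beta - 2) by ring.
    assert (Rpower y (- beta - 2) <= Rpower (s / 2) (- beta - 2))
      by (apply Rpower_le_base_nonpos; lra).
    pose proof (Rpower_pos y (- beta - 2)).
    rewrite Rabs_right by (apply Rle_ge; nra); nra.
Qed.

Definition near_const := 2 * beta * (beta + 1) * Rpower (s / 2) (- beta - 2) / (2 - 2 * alpha).

Lemma near_const_nonneg : 0 <= near_const.
Proof.
  unfold near_const; pose proof (Rpower_pos (s / 2) (- beta - 2)).
  apply Rmult_le_pos; [repeat apply Rmult_le_pos; lra|].
  left; apply Rinv_0_lt_compat; lra.
Qed.

Lemma near_bound a b : 0 < a <= b -> b <= s / 2 ->
  Rabs (RInt integrand a b) <= near_const * Rpower b (2 - 2 * alpha).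
Proof.
  intros Hab Hb; set (M := 2 * beta * (beta + 1) * Rpower (s / 2) (- beta - 2)).
  assert (HM : 0 <= M) by (unfold M; pose proof (Rpower_pos (s / 2) (- beta - 2));
                           repeat apply Rmult_le_pos; lra).
  eapply Rle_trans.
  - apply (abs_RInt_le_dominated integrand (fun t => M * Rpower t (1 - 2 * alpha)) a b
      (M * ((Rpower b (1 - 2 * alpha + 1) - Rpower a (1 - 2 * alpha + 1)) / (1 - 2 * alpha + 1))));
      [lra | apply integrand_ex; lra | apply is_RInt_scal_R, is_RInt_Rpower; lra|].
    intros t Ht; rewrite integrand_eq, Rabs_mult, (Rabs_right (Rpower t _))
      by (left; apply Rpower_pos).
    apply Rle_trans with (M * t ^ 2 * Rpower t (- (1 + 2 * alpha))).
    + apply Rmult_le_compat_r; [left; apply Rpower_pos|]; apply sdiff_near_zero; lra.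
    + right; rewrite Rmult_assoc; f_equal.
      rewrite <- Rpower_pow, <- Rpower_plus by lra; f_equal; simpl; ring.
  - replace (1 - 2 * alpha + 1) with (2 - 2 * alpha) by ring.
    pose proof (Rpower_pos a (2 - 2 * alpha)); pose proof (Rpower_pos b (2 - 2 * alpha)).
    unfold near_const; fold M; unfold Rdiv.
    assert (0 < / (2 - 2 * alpha)) by (apply Rinv_0_lt_compat; lra).
    assert (0 <= M * / (2 - 2 * alpha) * Rpower a (2 - 2 * alpha))
      by (apply Rmult_le_pos; [apply Rmult_le_pos|]; lra).
    lra.
Qed.

Lemma near_cauchy a b : 0 < a <= s / 2 -> 0 < b <= s / 2 ->
  Rabs (RInt integrand a b)
    <= near_const * Rpower a (2 - 2 * alpha) + near_const * Rpower b (2 - 2 * alpha).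
Proof.
  apply (abs_RInt_le_unordered integrand (fun u => 0 < u <= s / 2)
           (fun u => near_const * Rpower u (2 - 2 * alpha))).
  - intros u v Hu Hv; apply integrand_ex; lra.
  - intros u v Hu Hv Huv; pose proof (near_bound u v ltac:(lra) ltac:(lra)).
    pose proof near_const_nonneg; pose proof (Rpower_pos u (2 - 2 * alpha)); nra.
Qed.

(* Away from [0], [|sdiff| <= 2] and [t^(-1-2α)] is integrable at infinity. *)
Lemma tail_bound a b : 0 < a <= b ->
  Rabs (RInt integrand a b) <= / alpha * Rpower a (- (2 * alpha)).
Proof.
  intros Hab; eapply Rle_trans.
  - apply (abs_RInt_le_dominated integrand (fun t => 2 * Rpower t (- (1 + 2 * alpha))) a b
      (2 * ((Rpower b (- (1 + 2 * alpha) + 1) - Rpower a (- (1 + 2 * alpha) + 1))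
            / (- (1 + 2 * alpha) + 1))));
      [lra | apply integrand_ex; lra | apply is_RInt_scal_R, is_RInt_Rpower; lra|].
    intros t Ht; rewrite integrand_eq, Rabs_mult, (Rabs_right (Rpower t _))
      by (left; apply Rpower_pos).
    apply Rmult_le_compat_r; [left; apply Rpower_pos | apply sdiff_abs].
  - replace (- (1 + 2 * alpha) + 1) with (- (2 * alpha)) by ring.
    pose proof (Rpower_pos b (- (2 * alpha))); pose proof (Rpower_pos a (- (2 * alpha))).
    apply Rle_trans with (2 * (Rpower a (- (2 * alpha)) / (2 * alpha))); [|right; field; lra].
    apply Rmult_le_compat_l; [lra|].
    unfold Rdiv; replace (/ - (2 * alpha)) with (- / (2 * alpha)) by (field; lra).
    assert (0 < / (2 * alpha)) by (apply Rinv_0_lt_compat; lra); nra.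
Qed.

Lemma tail_cauchy a b : 0 < a -> 0 < b ->
  Rabs (RInt integrand a b) <= / alpha * Rpower a (- (2 * alpha)) + / alpha * Rpower b (- (2 * alpha)).
Proof.
  revert a b; apply (abs_RInt_le_unordered integrand (fun u => 0 < u)
           (fun u => / alpha * Rpower u (- (2 * alpha)))).
  - intros u v Hu Hv; apply integrand_ex; lra.
  - intros u v Hu Hv Huv; pose proof (tail_bound u v ltac:(lra)).
    assert (0 < / alpha) by (apply Rinv_0_lt_compat; lra).
    pose proof (Rpower_pos v (- (2 * alpha))); nra.
Qed.

Definition rate := Rpower (s / 2) (- (beta + 2 * alpha)).

(* On [[s, ∞)], [φ(-s+t) = 1], so [integrand t + t^(-1-2α)] is [O(s^(-β) t^(-1-2α))]. *)
Lemma far_bound r : s <= r ->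
  Rabs (RInt integrand s r + (Rpower s (- (2 * alpha)) - Rpower r (- (2 * alpha))) / (2 * alpha))
    <= / alpha * rate.
Proof.
  intros Hr; set (pw := fun t => Rpower t (- (1 + 2 * alpha))).
  assert (Ipw : is_RInt pw s r ((Rpower r (- (2 * alpha)) - Rpower s (- (2 * alpha))) / (- (2 * alpha))))
    by (replace (- (2 * alpha)) with (- (1 + 2 * alpha) + 1) by ring; apply is_RInt_Rpower; lra).
  replace (RInt integrand s r + (Rpower s (- (2 * alpha)) - Rpower r (- (2 * alpha))) / (2 * alpha))
    with (RInt (fun t => integrand t + pw t) s r).
  2:{ rewrite RInt_plus_R, (is_RInt_unique pw s r _ Ipw); [|apply integrand_ex; lra | eexists; eauto].
      match goal with |- ?a = ?b => change (@eq R a b) end; field; lra. }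
  pose proof (Rpower_pos s (- beta)).
  eapply Rle_trans.
  - apply (abs_RInt_le_dominated _ (fun t => (2 * Rpower s (- beta)) * pw t) s r
      ((2 * Rpower s (- beta)) * ((Rpower r (- (2 * alpha)) - Rpower s (- (2 * alpha))) / (- (2 * alpha)))));
      [lra | apply (ex_RInt_plus (V := R_CompleteNormedModule)); [apply integrand_ex; lra | eexists; eauto]
      | apply is_RInt_scal_R; auto |].
    intros t Ht; rewrite integrand_eq; unfold pw.
    replace (sdiff t * Rpower t (- (1 + 2 * alpha)) + Rpower t (- (1 + 2 * alpha)))
      with ((2 * phi beta (- s) - phi beta (- s - t)) * Rpower t (- (1 + 2 * alpha)))
      by (unfold sdiff; rewrite (phi_ge beta (- s + t)) by lra; ring).
    rewrite Rabs_mult, (Rabs_right (Rpower t _)) by (left; apply Rpower_pos).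
    apply Rmult_le_compat_r; [left; apply Rpower_pos | apply sdiff_left_part; lra].
  - pose proof (Rpower_pos r (- (2 * alpha))); pose proof (Rpower_pos s (- (2 * alpha))).
    assert (Hs : Rpower s (- beta) * Rpower s (- (2 * alpha)) <= rate).
    { rewrite <- Rpower_plus; unfold rate; replace (- beta + - (2 * alpha)) with (- (beta + 2 * alpha)) by ring.
      apply Rpower_le_base_nonpos; lra. }
    apply Rle_trans with (/ alpha * (Rpower s (- beta) * Rpower s (- (2 * alpha))));
      [|apply Rmult_le_compat_l; [left; apply Rinv_0_lt_compat; lra | exact Hs]].
    assert (Hk : 2 * Rpower s (- beta) / (2 * alpha) = / alpha * Rpower s (- beta)) by (field; lra).
    assert (0 < / alpha * Rpower s (- beta)) by (apply Rmult_lt_0_compat; [apply Rinv_0_lt_compat|]; lra).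
    replace (2 * Rpower s (- beta) * ((Rpower r (- (2 * alpha)) - Rpower s (- (2 * alpha))) / - (2 * alpha)))
      with (/ alpha * Rpower s (- beta) * (Rpower s (- (2 * alpha)) - Rpower r (- (2 * alpha))))
      by (field; lra).
    nra.
Qed.

(* On [[s/2, s-1]], the kernel is [O(s^(-1-2α))] and [φ(-s+t) <= (s-t)^(-β)] is integrable. *)
Lemma middle_bound : Rabs (RInt integrand (s / 2) (s - 1)) <= (2 + 1 / (1 - beta)) * rate.
Proof.
  set (P := Rpower (s / 2) (- (1 + 2 * alpha))).
  assert (HP : 0 < P) by apply Rpower_pos.
  pose proof (Rpower_pos s (- beta)) as Hsb.
  eapply Rle_trans.
  - apply (abs_RInt_le_dominated integrand
      (fun t => 2 * Rpower s (- beta) * P + P * Rpower (s - t) (- beta)) (s / 2) (s - 1)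
      ((s - 1 - s / 2) * (2 * Rpower s (- beta) * P) +
       P * ((Rpower (s - s / 2) (1 - beta) - Rpower (s - (s - 1)) (1 - beta)) / (1 - beta))));
      [lra | apply integrand_ex; lra | |].
    + apply (is_RInt_plus (V := R_CompleteNormedModule));
        [apply (is_RInt_const (V := R_CompleteNormedModule))|].
      apply is_RInt_scal_R, is_RInt_Rpower_reflected; lra.
    + intros t Ht; rewrite integrand_eq, Rabs_mult, (Rabs_right (Rpower t _))
        by (left; apply Rpower_pos).
      assert (Rpower t (- (1 + 2 * alpha)) <= P) by (apply Rpower_le_base_nonpos; lra).
      pose proof (sdiff_middle t ltac:(lra)); pose proof (Rpower_pos (s - t) (- beta)).
      apply Rle_trans with ((2 * Rpower s (- beta) + Rpower (s - t) (- beta)) * P); [|right; ring].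
      apply Rmult_le_compat; auto; [apply Rabs_pos | left; apply Rpower_pos].
  - replace (s - s / 2) with (s / 2) by field; replace (s - (s - 1)) with 1 by ring.
    rewrite Rpower_1_base.
    assert (Rpower s (- beta) <= Rpower (s / 2) (- beta)) by (apply Rpower_le_base_nonpos; lra).
    assert (E1 : Rpower (s / 2) (- beta) * P * (s / 2) = rate).
    { unfold P, rate; rewrite <- (Rpower_1 (s / 2)) at 3 by lra; rewrite <- !Rpower_plus.
      f_equal; ring. }
    assert (E2 : P * Rpower (s / 2) (1 - beta) = rate).
    { unfold P, rate; rewrite <- Rpower_plus; f_equal; ring. }
    pose proof (Rpower_pos (s / 2) (1 - beta)).
    assert (T1 : (s - 1 - s / 2) * (2 * Rpower s (- beta) * P) <= 2 * rate).
    { rewrite <- E1; apply Rle_trans with (s / 2 * (2 * Rpower s (- beta) * P)).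
      - apply Rmult_le_compat_r; [|lra]; apply Rmult_le_pos; lra.
      - assert (Rpower s (- beta) * P <= Rpower (s / 2) (- beta) * P)
          by (apply Rmult_le_compat_r; lra).
        nra. }
    assert (T2 : P * ((Rpower (s / 2) (1 - beta) - 1) / (1 - beta)) <= rate / (1 - beta)).
    { rewrite <- E2; unfold Rdiv; assert (0 < / (1 - beta)) by (apply Rinv_0_lt_compat; lra); nra. }
    unfold Rdiv in *; lra.
Qed.

Lemma edge_bound : Rabs (RInt integrand (s - 1) s) <= 2 * rate.
Proof.
  eapply Rle_trans.
  - apply (abs_RInt_le_const integrand (s - 1) s (2 * Rpower (s / 2) (- (1 + 2 * alpha))));
      [lra | apply integrand_ex; lra|].
    intros t Ht; rewrite integrand_eq, Rabs_mult, (Rabs_right (Rpower t _))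
      by (left; apply Rpower_pos).
    apply Rmult_le_compat; [apply Rabs_pos | left; apply Rpower_pos | apply sdiff_abs|].
    apply Rpower_le_base_nonpos; lra.
  - assert (Rpower (s / 2) (- (1 + 2 * alpha)) <= rate) by (apply Rle_Rpower; lra).
    replace (s - (s - 1)) with 1 by ring; lra.
Qed.

Definition asymptotic_const :=
  2 * beta * (beta + 1) / (2 - 2 * alpha) + (2 + 1 / (1 - beta)) + 2 + 1 / alpha.

Lemma truncated_bound e r : 0 < e <= s / 2 -> s <= r ->
  Rabs (RInt integrand e r + Rpower s (- (2 * alpha)) / (2 * alpha))
    <= asymptotic_const * rate + / (2 * alpha) * Rpower r (- (2 * alpha)).
Proof.
  intros He Hr.
  assert (Esplit : RInt integrand e r = RInt integrand e (s / 2) + RInt integrand (s / 2) (s - 1)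
                     + RInt integrand (s - 1) s + RInt integrand s r).
  { rewrite !Rplus_assoc, (RInt_Chasles_R integrand (s - 1) s r),
      (RInt_Chasles_R integrand (s / 2) (s - 1) r), (RInt_Chasles_R integrand e (s / 2) r);
      auto; apply integrand_ex; lra. }
  pose proof (near_bound e (s / 2) ltac:(lra) ltac:(lra)) as HA.
  replace (near_const * Rpower (s / 2) (2 - 2 * alpha))
    with (2 * beta * (beta + 1) / (2 - 2 * alpha) * rate) in HA.
  2:{ unfold near_const, rate, Rdiv.
      replace (- (beta + 2 * alpha)) with ((- beta - 2) + (2 - 2 * alpha)) by ring.
      rewrite Rpower_plus; ring. }
  pose proof middle_bound; pose proof edge_bound; pose proof (far_bound r Hr).
  pose proof (Rpower_pos r (- (2 * alpha))).
  assert (0 < / (2 * alpha) * Rpower r (- (2 * alpha)))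
    by (apply Rmult_lt_0_compat; [apply Rinv_0_lt_compat; lra | auto]).
  rewrite Esplit.
  set (A := RInt integrand e (s / 2)) in *; set (B1 := RInt integrand (s / 2) (s - 1)) in *;
    set (B2 := RInt integrand (s - 1) s) in *; set (B3 := RInt integrand s r) in *.
  set (B3' := B3 + (Rpower s (- (2 * alpha)) - Rpower r (- (2 * alpha))) / (2 * alpha)) in *.
  replace (A + B1 + B2 + B3 + Rpower s (- (2 * alpha)) / (2 * alpha))
    with (A + B1 + B2 + B3' + / (2 * alpha) * Rpower r (- (2 * alpha))) by (unfold B3'; field; lra).
  pose proof (Rabs_triang (A + B1 + B2 + B3') (/ (2 * alpha) * Rpower r (- (2 * alpha)))).
  pose proof (Rabs_triang (A + B1 + B2) B3'); pose proof (Rabs_triang (A + B1) B2);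
    pose proof (Rabs_triang A B1).
  rewrite (Rabs_right (/ (2 * alpha) * Rpower r (- (2 * alpha)))) in * by lra.
  unfold asymptotic_const; unfold Rdiv in *; lra.
Qed.

Lemma pv_integrand : exists L0,
  converges_0_infty (fun e r => RInt integrand e r) L0 /\
  Rabs (L0 + Rpower s (- (2 * alpha)) / (2 * alpha)) <= asymptotic_const * rate.
Proof.
  assert (Hv : vanishes_at_infty (fun r => / alpha * Rpower r (- (2 * alpha))))
    by (apply vanishes_at_infty_Rpower; [left; apply Rinv_0_lt_compat|]; lra).
  destruct (converges_of_cauchy_net (fun e r => RInt integrand e r)
              (fun e => near_const * Rpower e (2 - 2 * alpha))
              (fun r => / alpha * Rpower r (- (2 * alpha))) (s / 2) s) as [L0 HL0];
    [lra | apply vanishes_at_0_Rpower; [apply near_const_nonneg | lra] | exact Hv | |].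
  { intros e e' r r' He He' Hr Hr'.
    replace (RInt integrand e r - RInt integrand e' r')
      with (RInt integrand e e' + RInt integrand r' r)
      by (rewrite <- (RInt_Chasles_R _ e e' r), <- (RInt_Chasles_R _ e' r' r)
            by (apply integrand_ex; lra); ring).
    pose proof (near_cauchy e e' ltac:(lra) ltac:(lra)).
    pose proof (tail_cauchy r' r ltac:(lra) ltac:(lra)).
    pose proof (Rabs_triang (RInt integrand e e') (RInt integrand r' r)); lra. }
  exists L0; split; [exact HL0|].
  replace (L0 + Rpower s (- (2 * alpha)) / (2 * alpha))
    with (L0 - - (Rpower s (- (2 * alpha)) / (2 * alpha))) by ring.
  apply (converges_bound _ L0 _ _ (fun r => / (2 * alpha) * Rpower r (- (2 * alpha))) (s / 2) s HL0);
    [apply vanishes_at_infty_Rpower; [left; apply Rinv_0_lt_compat|]; lra | lra |].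
  intros e r He Hr; replace (RInt integrand e r - - (Rpower s (- (2 * alpha)) / (2 * alpha)))
    with (RInt integrand e r + Rpower s (- (2 * alpha)) / (2 * alpha)) by ring.
  apply truncated_bound; lra.
Qed.

End Integrand.

(** * From the principal value on (0,∞) to the fractional Laplacian *)

Lemma is_RInt_Defs_of_ex f a b : ex_RInt f a b -> Defs.is_RInt f a b (RInt f a b).
Proof. intros H; exists (ex_RInt_Reals_0 f a b H); symmetry; apply RInt_Reals. Qed.

Section Kernel.
Variables alpha beta x : R.

Definition kernel z := (phi beta x - phi beta z) / Rpower (Rabs (x - z)) (1 + 2 * alpha).

Lemma kernel_continuous z : z <> x -> continuity_pt kernel z.
Proof.
  intros Hz; unfold kernel; apply continuity_pt_div.
  - apply continuity_pt_minus; [apply continuity_pt_const; intros ?; reflexivity|].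
    apply phi_continuous.
  - apply continuity_pt_Rpower_comp; [|apply Rabs_pos_lt; lra].
    apply (continuity_pt_comp (fun z => x - z) Rabs).
    + apply continuity_pt_minus; [apply continuity_pt_const; intros ?; reflexivity|].
      apply continuity_pt_id.
    + apply continuity_pt_filterlim, continuous_Rabs.
  - pose proof (Rpower_pos (Rabs (x - z)) (1 + 2 * alpha)); lra.
Qed.

Lemma kernel_ex a b : (a < x /\ b < x) \/ (x < a /\ x < b) -> ex_RInt kernel a b.
Proof.
  intros H; apply (ex_RInt_continuous (V := R_CompleteNormedModule)); intros z Hz.
  apply continuity_pt_filterlim, kernel_continuous.
  unfold Rmin, Rmax in Hz; destruct Rle_dec; lra.
Qed.

Lemma kernel_fold eps r : 0 < eps < r ->
  RInt kernel (x - r) (x - eps) + RInt kernel (x + eps) (x + r)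
    = RInt (integrand alpha beta (- x)) eps r.
Proof.
  intros He.
  assert (Hlin : forall u, u <> 0 -> ex_RInt (fun t => kernel (u * t + x)) eps r).
  { intros u Hu; apply (ex_RInt_continuous (V := R_CompleteNormedModule)); intros t Ht.
    apply continuity_pt_filterlim.
    apply (continuity_pt_comp (fun t => u * t + x) kernel).
    - apply continuity_pt_plus; [|apply continuity_pt_const; intros ?; reflexivity].
      apply continuity_pt_mult; [apply continuity_pt_const; intros ?; reflexivity|].
      apply continuity_pt_id.
    - apply kernel_continuous; unfold Rmin, Rmax in Ht; destruct Rle_dec;
        intros E; apply Hu; nra. }
  assert (E1 : RInt kernel (x - r) (x - eps) = RInt (fun t => kernel (-1 * t + x)) eps r).
  { pose proof (RInt_comp_lin (V := R_CompleteNormedModule) kernel (-1) x eps r) as H.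
    replace (-1 * eps + x) with (x - eps) in H by ring.
    replace (-1 * r + x) with (x - r) in H by ring.
    rewrite (RInt_swap_R kernel (x - eps) (x - r)) by (apply kernel_ex; lra).
    rewrite <- H by (apply kernel_ex; lra).
    rewrite (RInt_ext _ (fun t => - kernel (-1 * t + x)))
      by (intros t _; unfold scal; simpl; unfold mult; simpl; ring).
    rewrite (RInt_opp (V := R_CompleteNormedModule)) by (apply Hlin; lra).
    simpl; unfold opp; simpl; ring. }
  assert (E2 : RInt kernel (x + eps) (x + r) = RInt (fun t => kernel (1 * t + x)) eps r).
  { pose proof (RInt_comp_lin (V := R_CompleteNormedModule) kernel 1 x eps r) as H.
    replace (1 * eps + x) with (x + eps) in H by ring.
    replace (1 * r + x) with (x + r) in H by ring.
    rewrite <- H by (apply kernel_ex; lra).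
    apply RInt_ext; intros t _; unfold scal; simpl; unfold mult; simpl; ring. }
  rewrite E1, E2, <- RInt_plus_R by (apply Hlin; lra).
  apply RInt_ext; intros t Ht; rewrite Rmin_left, Rmax_right in Ht by lra.
  unfold kernel, integrand, sdiff.
  replace (x - (-1 * t + x)) with t by ring; replace (x - (1 * t + x)) with (- t) by ring.
  rewrite Rabs_Ropp, Rabs_right, Ropp_involutive by lra.
  replace (-1 * t + x) with (x - t) by ring; replace (1 * t + x) with (x + t) by ring.
  match goal with |- ?a = ?b => change (@eq R a b) end.
  field; pose proof (Rpower_pos t (1 + 2 * alpha)); lra.
Qed.

Lemma frac_lap_of_pv C L0 :
  converges_0_infty (fun e r => RInt (integrand alpha beta (- x)) e r) L0 ->
  is_frac_lap alpha C (phi beta) x (C * L0).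
Proof.
  intros HL0 e He; cbv zeta; fold kernel.
  destruct (HL0 (e / (Rabs C + 1))) as [delta [R0 [Hdelta HR0]]];
    [apply Rdiv_lt_0_compat; pose proof (Rabs_pos C); lra|].
  exists delta, R0; split; [exact Hdelta|]; intros eps r Heps Hr Hepsr.
  exists (RInt kernel (x - r) (x - eps)), (RInt kernel (x + eps) (x + r)).
  split; [apply is_RInt_Defs_of_ex, kernel_ex; lra|].
  split; [apply is_RInt_Defs_of_ex, kernel_ex; lra|].
  rewrite <- Rmult_minus_distr_l, kernel_fold, Rabs_mult by lra.
  specialize (HR0 eps r Heps Hr).
  pose proof (Rabs_pos C); pose proof (Rabs_pos (RInt (integrand alpha beta (- x)) eps r - L0)).
  assert (He' : 0 < e / (Rabs C + 1)) by (apply Rdiv_lt_0_compat; lra).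
  apply Rlt_le_trans with ((Rabs C + 1) * (e / (Rabs C + 1))); [nra | right; field; lra].
Qed.

End Kernel.

Lemma asymptotic_const_pos alpha beta : 1/2 < alpha < 1 -> 0 < beta < 1 ->
  0 < asymptotic_const alpha beta.
Proof.
  intros ha hb; unfold asymptotic_const.
  assert (0 < 2 * beta * (beta + 1) / (2 - 2 * alpha)) by (apply Rdiv_lt_0_compat; nra).
  assert (0 < 1 / (1 - beta)) by (apply Rdiv_lt_0_compat; lra).
  assert (0 < 1 / alpha) by (apply Rdiv_lt_0_compat; lra); lra.
Qed.

(* [(s/2)^(-β-2α) = 2^(β+2α) / s^(β+2α)], the form in which the theorem states the remainder. *)
Lemma rate_eq alpha beta s : 0 < s ->
  rate alpha beta s = Rpower 2 (beta + 2 * alpha) / Rpower s (beta + 2 * alpha).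
Proof.
  intros hs; unfold rate; rewrite Rpower_Ropp.
  replace s with (2 * (s / 2)) at 2 by field; rewrite <- Rpower_mult_distr by lra.
  pose proof (Rpower_pos 2 (beta + 2 * alpha)); pose proof (Rpower_pos (s / 2) (beta + 2 * alpha)).
  field; lra.
Qed.

(* With [φ' = β s^(-β-1)] the drift terms cancel exactly, leaving [C (L0 + s^(-2α)/(2α))]. *)
Lemma expansion_remainder alpha beta c C L0 s : 0 < alpha -> 0 < s ->
  C * L0 + c * (beta * Rpower s (- beta - 1))
    - (- C / (2 * alpha * Rpower s (2 * alpha)) + c * beta / Rpower s (beta + 1))
  = C * (L0 + Rpower s (- (2 * alpha)) / (2 * alpha)).
Proof.
  intros ha hs; replace (- beta - 1) with (- (beta + 1)) by ring; rewrite !Rpower_Ropp.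
  pose proof (Rpower_pos s (2 * alpha)); pose proof (Rpower_pos s (beta + 1)).
  field; lra.
Qed.

Theorem lemma2p2 (alpha beta c Calpha : R)
  (halpha : 1/2 < alpha < 1) (hbeta : 0 < beta < 1)
  (hC : is_c_alpha alpha Calpha) :
  exists K M : R, 0 < K /\
    forall x, x < - M ->
      exists L d, is_frac_lap alpha Calpha (phi beta) x L /\
        derivable_pt_lim (phi beta) x d /\
        Rabs (L + c * d
              - (- Calpha / (2 * alpha * Rpower (Rabs x) (2 * alpha))
                 + c * beta / Rpower (Rabs x) (beta + 1)))
        <= K / Rpower (Rabs x) (beta + 2 * alpha).
Proof.
  pose proof (asymptotic_const_pos alpha beta halpha hbeta) as HK0.
  set (K0 := asymptotic_const alpha beta) in *.
  pose proof (Rpower_pos 2 (beta + 2 * alpha)) as H2; pose proof (Rabs_pos Calpha).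
  exists (Rabs Calpha * K0 * Rpower 2 (beta + 2 * alpha) + 1), 2; split;
    [assert (0 <= Rabs Calpha * K0 * Rpower 2 (beta + 2 * alpha)) by
       (apply Rmult_le_pos; [apply Rmult_le_pos|]; lra); lra|].
  intros x hx; set (s := - x); assert (hs : 2 < s) by (unfold s; lra).
  destruct (pv_integrand alpha beta s halpha hbeta hs) as [L0 [HL0 Hbound]].
  exists (Calpha * L0), (beta * Rpower s (- beta - 1)); split; [|split].
  - exact (frac_lap_of_pv alpha beta x Calpha L0 HL0).
  - apply phi_derivative; lra.
  - rewrite (Rabs_left x) by lra; fold s.
    rewrite expansion_remainder, Rabs_mult by lra.
    rewrite rate_eq in Hbound by lra; fold K0 in Hbound.
    pose proof (Rpower_pos s (beta + 2 * alpha)).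
    apply Rle_trans with (Rabs Calpha * (K0 * (Rpower 2 (beta + 2 * alpha) / Rpower s (beta + 2 * alpha)))).
    + apply Rmult_le_compat_l; lra.
    + unfold Rdiv; assert (0 < / Rpower s (beta + 2 * alpha)) by (apply Rinv_0_lt_compat; lra).
      nra.
Qed.
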